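(* Let $K$ be a field of characteristic zero, $0\ne c\in K$, $\phi$ the $K$-algebra endomorphism of $K[x]$ with $\phi(x)=x+c$, and $\delta=\mathrm{id}-\phi$. Let $a\in K$, $I$ the ideal generated by $x^2-ax$, $\beta=a/c$, and $D_n(t)=\frac{B_{n+1}(t)-B_{n+1}}{(n+1)t}\in\mathbb{Q}[t]$ for $n\ge0$. Let $f(x)=\sum_{i=0}^d a_ix^i\in K[x]$. Then $f\in\delta(I)$ if and only if $\sum_{i=0}^d a_iD_i(\beta)c^i=0$.
   Context: $\mathrm{id}$ is the identity map of $K[x]$. The Bernoulli polynomials are defined by $\frac{ue^{tu}}{e^u-1}=\sum_{n\ge0}B_n(t)\frac{u^n}{n!}$, and $B_n=B_n(0)$ are the Bernoulli numbers. *)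

From HB Require Import structures.
From mathcomp Require Import all_boot all_order all_algebra.
Set Implicit Arguments. Unset Strict Implicit. Unset Printing Implicit Defensive.
Import Order.TTheory GRing.Theory Num.Theory.
Local Open Scope ring_scope.

(* Bernoulli polynomials over Q, defined by comparing coefficients in the
   generating function identity  (e^u - 1) * sum_n B_n(t) u^n/n! = u e^{tu}:
   the coefficient of u^(n+1)/(n+1)! gives
     sum_{k=0}^{n} C(n+1,k) B_k(t) = (n+1) t^n,
   i.e.  B_n(t) = t^n - 1/(n+1) * sum_{k<n} C(n+1,k) B_k(t). *)
Fixpoint bern_seq (n : nat) : seq {poly rat} :=
  match n with
  | 0 => [:: 1]
  | m.+1 =>
      let s := bern_seq m in
      rcons s ('X^n - (n.+1%:R)^-1 *: \sum_(k < n) ('C(n.+1, k))%:R *: s`_k)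
  end.

Definition bernoulli_poly (n : nat) : {poly rat} := (bern_seq n)`_n.

Definition bernoulli_num (n : nat) : rat := (bernoulli_poly n).[0].

(* D_n(t) = (B_{n+1}(t) - B_{n+1}) / ((n+1) t)  in Q[t]
   (the numerator has zero constant term, so division by t is exact). *)
Definition bernD (n : nat) : {poly rat} :=
  (n.+1%:R)^-1 *: ((bernoulli_poly n.+1 - (bernoulli_num n.+1)%:P) %/ 'X).

Definition phi (K : fieldType) (c : K) (p : {poly K}) : {poly K} :=
  p \Po ('X + c%:P).

Definition delta (K : fieldType) (c : K) (p : {poly K}) : {poly K} :=
  p - phi c p.

Definition in_ideal (K : fieldType) (a : K) (g : {poly K}) : Prop :=
  exists q : {poly K}, g = q * ('X^2 - a *: 'X).

Definition in_delta_image (K : fieldType) (c a : K) (f : {poly K}) : Prop :=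
  exists g : {poly K}, in_ideal a g /\ f = delta c g.

From HB Require Import structures.
From mathcomp Require Import all_boot all_order all_algebra.
From mathcomp Require Import ring.

(* Substituting x := c x turns delta into the unit-step operator
   Delta h = h - h(x + 1) and the ideal (x^2 - a x) into (x (x - beta)).
   Since E_n(t) := t D_n(t) = (B_(n+1)(t) - B_(n+1)) / (n + 1) satisfies
   E_n(t + 1) - E_n(t) = t^n, the polynomial G = sum_i a_i c^i E_i solves
   Delta (- G) = f(c x).  In characteristic 0 the kernel of Delta consists of
   the constants, and G as well as every element of (x (x - beta)) vanishes
   at 0, so f lies in delta(I) iff x (x - beta) divides G = x sum_i a_i c^i D_i,
   i.e. iff sum_i a_i c^i D_i vanishes at beta. *)

Set Implicit Arguments.
Unset Strict Implicit.
Unset Printing Implicit Defensive.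

Import Order.TTheory GRing.Theory Num.Theory.
Local Open Scope ring_scope.

Lemma size_bern_seq n : size (bern_seq n) = n.+1.
Proof. by elim: n => //= n IH; rewrite size_rcons IH. Qed.

Lemma nth_bern_seq n k : (k <= n)%N -> (bern_seq n)`_k = bernoulli_poly k.
Proof.
elim: n => [|n IH]; first by rewrite leqn0 => /eqP->.
rewrite leq_eqVlt => /orP[/eqP->//|]; rewrite ltnS => le_kn.
by rewrite /= nth_rcons size_bern_seq ltnS le_kn IH.
Qed.

Lemma bernoulli_poly_sum n :
  \sum_(k < n.+1) 'C(n.+1, k)%:R *: bernoulli_poly k = n.+1%:R *: 'X^n.
Proof.
rewrite big_ord_recr /= binSn; case: n => [|n].
  by rewrite big_ord0 add0r expr0.
rewrite {2}/bernoulli_poly /= nth_rcons size_bern_seq ltnn eqxx.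
rewrite scalerBr scalerA mulfV ?pnatr_eq0 // scale1r.
rewrite [X in _ - X](eq_bigr (fun k : 'I_n.+1 => 'C(n.+2, k)%:R *: bernoulli_poly k)).
  by rewrite addrC subrK.
by move=> k _; rewrite nth_bern_seq // -ltnS.
Qed.

Lemma bernoulli_poly_diff n :
  bernoulli_poly n \Po ('X + 1) - bernoulli_poly n = n%:R *: 'X^(n.-1).
Proof.
elim/ltn_ind: n => -[_ | m IH].
  by rewrite /bernoulli_poly /= -polyC1 comp_polyC subrr scale0r.
pose D p : {poly rat} := p \Po ('X + 1) - p.
have D_Z w p : D (w *: p) = w *: D p by rewrite /D linearZ scalerBr.
have D_sumZ n (F : 'I_n -> {poly rat}) (w : 'I_n -> rat) :
    D (\sum_(k < n) w k *: F k) = \sum_(k < n) w k *: D (F k).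
  by rewrite /D linear_sum -sumrB; apply: eq_bigr => k _; exact: D_Z.
have D_Xn : D 'X^(m.+1) = \sum_(i < m.+1) 'C(m.+1, i)%:R *: 'X^i.
  rewrite /D comp_Xn_poly exprD1n big_ord_recr /= binn addrK.
  by apply: eq_bigr => i _; rewrite scaler_nat.
have D_lower : \sum_(k < m.+1) 'C(m.+2, k)%:R *: D (bernoulli_poly k)
    = m.+2%:R *: \sum_(i < m) 'C(m.+1, i)%:R *: 'X^i.
  rewrite big_ord_recl /= [D _]IH // scale0r scaler0 add0r scaler_sumr.
  apply: eq_bigr => i _; rewrite [D _]IH ?ltnS // !scalerA -!natrM.
  by rewrite /bump add1n mulnC (mul_bin_diag m.+2).
have m2_neq0 : m.+2%:R != 0 :> rat by rewrite pnatr_eq0.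
have := congr1 D (bernoulli_poly_sum m.+1).
rewrite D_sumZ big_ord_recr /= D_lower binSn D_Z D_Xn big_ord_recr /= binSn.
by rewrite -!scalerDr => /(scalerI m2_neq0)/addrI.
Qed.

Lemma bernD_mulX n : bernD n * 'X =
  (n.+1%:R)^-1 *: (bernoulli_poly n.+1 - (bernoulli_num n.+1)%:P).
Proof.
rewrite /bernD -scalerAl divpK // -(subr0 'X) dvdp_XsubCl.
by rewrite /root !hornerE subrr.
Qed.

Lemma bernD_mulX_diff n : (bernD n * 'X) \Po ('X + 1) - bernD n * 'X = 'X^n.
Proof.
rewrite bernD_mulX comp_polyZ -scalerBr comp_polyB comp_polyC opprB addrA subrK.
by rewrite bernoulli_poly_diff scalerA mulVf ?pnatr_eq0 // scale1r.
Qed.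

Lemma map_bernD_mulX_diff (S : nzRingType) (f : {rmorphism rat -> S}) n :
  (map_poly f (bernD n) * 'X) \Po ('X + 1) - map_poly f (bernD n) * 'X = 'X^n.
Proof.
have := congr1 (map_poly f) (bernD_mulX_diff n).
by rewrite rmorphB /= map_comp_poly rmorphM /= rmorphD /= map_polyX rmorph1 map_polyXn.
Qed.

Section Pchar0Idomain.
Variables (R : idomainType) (charR : [pchar R] =i pred0).

Lemma pchar0_natr_inj : injective (fun n : nat => n%:R : R).
Proof.
suff le_inj m n : (m <= n)%N -> m%:R = n%:R :> R -> m = n.
  move=> m n /= e; case: (leqP m n) => [le_mn | /ltnW le_nm].
    exact: le_inj.
  exact: esym (le_inj _ _ le_nm (esym e)).
move=> le_mn e; apply/eqP; rewrite eqn_leq le_mn /= -subn_eq0.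
by rewrite -(pcharf0P R).1 // natrB // e subrr.
Qed.

Lemma shift_invariant_polyC (p : {poly R}) :
  p \Po ('X + 1) = p -> p = (p.[0])%:P.
Proof.
move=> p_inv; have p_nat n : p.[n%:R] = p.[0].
  by elim: n => // n <-; rewrite -{2}p_inv horner_comp !hornerE natr1.
apply/eqP; rewrite -subr_eq0; apply: contraT => q_neq0.
set q := p - _ in q_neq0; pose rs := mkseq (fun n => n%:R : R) (size q).
have q_rs : all (root q) rs.
  by apply/allP => _ /mapP[n _ ->]; rewrite /root !hornerE p_nat subrr.
have := max_poly_roots q_neq0 q_rs (mkseq_uniq _ pchar0_natr_inj).
by rewrite size_mkseq ltnn.
Qed.

End Pchar0Idomain.

Lemma in_idealE (K : fieldType) (a : K) g :
  in_ideal a g <-> ('X^2 - a *: 'X) %| g.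
Proof. by split=> [[q ->]|/dvdpP//]; exact: dvdp_mull. Qed.

Section Scaling.
Variables (K : fieldType) (c : K).
Hypothesis c_neq0 : c != 0.

Lemma comp_poly_scaleK : cancel (comp_poly (c *: 'X)) (comp_poly (c^-1 *: 'X)).
Proof.
move=> p; rewrite -comp_polyA comp_polyZ comp_polyX scalerA mulfV //.
by rewrite scale1r comp_polyXr.
Qed.

Lemma comp_poly_scaleVK : cancel (comp_poly (c^-1 *: 'X)) (comp_poly (c *: 'X)).
Proof.
move=> p; rewrite -comp_polyA comp_polyZ comp_polyX scalerA mulVf //.
by rewrite scale1r comp_polyXr.
Qed.

Lemma delta_comp_scale g : delta c g \Po (c *: 'X) = delta 1 (g \Po (c *: 'X)).
Proof.
rewrite /delta /phi comp_polyB -!comp_polyA; congr (_ - comp_poly _ g).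
rewrite comp_polyD comp_polyX comp_polyC comp_polyZ comp_polyX.
by rewrite scalerDr scale_polyC mulr1.
Qed.

Lemma ideal_gen_comp_scale b :
  ('X^2 - (b * c) *: 'X) \Po (c *: 'X) = c ^+ 2 *: ('X * ('X - b%:P)).
Proof.
rewrite comp_polyB comp_polyZ comp_Xn_poly comp_polyX -!mul_polyC.
by rewrite polyCM polyC_exp; ring.
Qed.

Lemma in_ideal_comp_scale a g :
  in_ideal a g <-> 'X * ('X - (a / c)%:P) %| g \Po (c *: 'X).
Proof.
have gen_eqp : ('X^2 - a *: 'X) \Po (c *: 'X) %= 'X * ('X - (a / c)%:P).
  by rewrite -{1}(divfK c_neq0 a) ideal_gen_comp_scale eqp_scale // expf_neq0.
rewrite in_idealE -(eqp_dvdl _ gen_eqp); split; first exact: dvdp_comp_poly.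
by move/(dvdp_comp_poly (c^-1 *: 'X)); rewrite !comp_poly_scaleK.
Qed.

Lemma in_delta_image_comp_scale a f :
  in_delta_image c a f <->
  exists2 h, 'X * ('X - (a / c)%:P) %| h & delta 1 h = f \Po (c *: 'X).
Proof.
split=> [[g [g_I ->]] | [h h_dvd h_f]].
  exists (g \Po (c *: 'X)); first exact/in_ideal_comp_scale.
  by rewrite delta_comp_scale.
exists (h \Po (c^-1 *: 'X)); split.
  by apply/in_ideal_comp_scale; rewrite comp_poly_scaleVK.
by apply: (can_inj comp_poly_scaleK); rewrite delta_comp_scale comp_poly_scaleVK.
Qed.

End Scaling.

Section Pchar0Field.
Variables (K : fieldType) (charK : [pchar K] =i pred0).

(* The library declares ratr a ring morphism only into a numFieldType. *)
Lemma pchar0_denq_neq0 x : (denq x)%:~R != 0 :> K.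
Proof. by case: (denqP x) => d ->; rewrite (pcharf0P K).1. Qed.

Lemma pchar0_ratr_frac x (n d : int) :
  d%:~R != 0 :> K -> x * d%:~R = n%:~R -> (ratr x : K) = n%:~R / d%:~R.
Proof.
move=> d_neq0 xd_n; have num_den : numq x * d = n * denq x.
  by apply: (@intr_inj rat); rewrite !intrM numqE -xd_n mulrAC.
by apply/eqP; rewrite eqr_div ?pchar0_denq_neq0 // -!intrM num_den.
Qed.

Fact pchar0_ratr_is_zmod_morphism : zmod_morphism (@ratr K).
Proof.
move=> x y; have dxy_neq0 := mulf_neq0 (pchar0_denq_neq0 x) (pchar0_denq_neq0 y).
rewrite (@pchar0_ratr_frac _ (numq x * denq y - numq y * denq x) (denq x * denq y)).
- by rewrite /ratr !(intrM, intrB); field; rewrite ?pchar0_denq_neq0.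
- by rewrite intrM.
- by rewrite !(intrM, intrB) !numqE; ring.
Qed.

Fact pchar0_ratr_is_monoid_morphism : monoid_morphism (@ratr K).
Proof.
split=> [|x y]; first by rewrite /ratr divr1.
have dxy_neq0 := mulf_neq0 (pchar0_denq_neq0 x) (pchar0_denq_neq0 y).
rewrite (@pchar0_ratr_frac _ (numq x * numq y) (denq x * denq y)).
- by rewrite /ratr !intrM; field; rewrite ?pchar0_denq_neq0.
- by rewrite intrM.
- by rewrite !intrM !numqE; ring.
Qed.

Definition pchar0_ratr : {rmorphism rat -> K} :=
  HB.pack (@ratr K)
    (GRing.isZmodMorphism.Build _ _ _ pchar0_ratr_is_zmod_morphism)
    (GRing.isMonoidMorphism.Build _ _ _ pchar0_ratr_is_monoid_morphism).

Lemma delta1_preimage_dvdp (d p : {poly K}) : root d 0 -> root p 0 ->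
  (exists2 h, d %| h & delta 1 h = delta 1 p) <-> d %| p.
Proof.
move=> d0 p0; split=> [[h d_h] | d_p]; last by exists p.
move=> e; have /(shift_invariant_polyC charK) : (h - p) \Po ('X + 1) = h - p.
  apply/esym/subr0_eq; rewrite comp_polyB -polyC1.
  by transitivity (delta 1 h - delta 1 p); [rewrite /delta /phi; ring | rewrite e subrr].
rewrite !hornerE (eqP (root_dvdp d_h d0)) (eqP p0) subrr => /eqP.
by rewrite subr_eq0 => /eqP <-.
Qed.

End Pchar0Field.

Section BernoulliCombination.
Variables (K : fieldType) (charK : [pchar K] =i pred0).

Definition bernD_comb (c : K) (f : {poly K}) : {poly K} :=
  \sum_(i < size f) (f`_i * c ^+ i) *: map_poly ratr (bernD i).

Lemma bernD_comb_mulX_diff c f :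
  (bernD_comb c f * 'X) \Po ('X + 1) - bernD_comb c f * 'X = f \Po (c *: 'X).
Proof.
rewrite /bernD_comb mulr_suml linear_sum -sumrB comp_polyE.
apply: eq_bigr => i _; rewrite -scalerAl linearZ -scalerBr /=.
by rewrite (map_bernD_mulX_diff (pchar0_ratr charK)) exprZn scalerA.
Qed.

Lemma horner_bernD_comb c f x : (bernD_comb c f).[x] =
  \sum_(i < size f) f`_i * (map_poly ratr (bernD i)).[x] * c ^+ i.
Proof. by rewrite horner_sum; apply: eq_bigr => i _; rewrite hornerZ mulrAC. Qed.

End BernoulliCombination.

Theorem corollary4p6 (K : fieldType) (charK : [pchar K] =i pred0)
    (c : K) (hc : c != 0) (a : K) (f : {poly K}) :
  in_delta_image c a f <->
  \sum_(i < size f) f`_i * (map_poly ratr (bernD i)).[a / c] * c ^+ i = 0.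
Proof.
set G := bernD_comb c f * 'X.
have f_diff : f \Po (c *: 'X) = delta 1 (- G).
  by rewrite -(bernD_comb_mulX_diff charK) /delta /phi polyC1 linearN opprK addrC.
have G0 : root (- G) 0 by rewrite rootN /root hornerMX mulr0.
have d0 : root ('X * ('X - (a / c)%:P)) 0 by rewrite rootM rootX eqxx.
rewrite in_delta_image_comp_scale // f_diff delta1_preimage_dvdp // dvdpNr.
rewrite /G mulrC dvdp_mul2r ?polyX_eq0 // dvdp_XsubCl -horner_bernD_comb.
by split=> /rootP.
Qed.
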